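(* Let $S$ be a cyclotomic numerical semigroup. Then \[ \mathrm P_S(x)=\prod_{d\in\mathcal D}\Phi_d(x)^{e_d}, \] where $\mathcal D=\{d_1,\ldots,d_s\}$ is a finite set of positive integers and the exponents $e_d$ are positive integers. Furthermore, all elements of $\mathcal D$ are composite.
   Context: A numerical semigroup is a submonoid $S$ of $(\mathbb N,+)$ with $\mathbb N\setminus S$ finite; its semigroup polynomial is $\mathrm P_S(x)=(1-x)\sum_{s\in S}x^s$ (a monic polynomial with integer coefficients). A Kronecker polynomial is a monic polynomial with integer coefficients all of whose complex roots lie in the closed unit disc. $S$ is called cyclotomic if $\mathrm P_S$ is a Kronecker polynomial. $\Phi_n$ denotes the $n$-th cyclotomic polynomial. *)

From mathcomp Require Import all_boot all_order all_algebra all_field.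
Set Implicit Arguments. Unset Strict Implicit. Unset Printing Implicit Defensive.
Import Order.TTheory GRing.Theory Num.Theory.
Local Open Scope ring_scope.

Definition numerical_semigroup (S : pred nat) : Prop :=
  [/\ 0%N \in S,
      (forall a b, a \in S -> b \in S -> (a + b)%N \in S)
    & exists N : nat, forall n, (N <= n)%N -> n \in S].

(* Coefficient of x^n in (1 - x) * \sum_{s in S} x^s. *)
Definition sgp_coef (S : pred nat) (n : nat) : int :=
  (n \in S)%:Z - (if n is m.+1 then (m \in S)%:Z else 0).

Definition is_semigroup_poly (S : pred nat) (P : {poly int}) : Prop :=
  forall n : nat, P`_n = sgp_coef S n.

Definition kronecker (P : {poly int}) : Prop :=
  P \is monic /\
  forall z : algC, root (map_poly (intr : int -> algC) P) z -> `|z| <= 1.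

Definition composite (d : nat) : bool := (1 < d)%N && ~~ prime d.

From mathcomp Require Import all_boot all_order all_algebra all_field.
From mathcomp Require Import zify.
Set Implicit Arguments. Unset Strict Implicit. Unset Printing Implicit Defensive.
Import Order.TTheory GRing.Theory Num.Theory.
Local Open Scope ring_scope.

(* Since 0 is in S and S contains every large integer, P_S(0) = P_S(1) = 1.
   By Kronecker's theorem every root of P_S is a root of unity: if z_1..z_n
   are the roots, the polynomials prod_i (X - z_i^k) are the characteristic
   polynomials of the powers of the companion matrix of P_S, hence integral,
   with coefficients bounded by 2^n; so there are finitely many of them and
   the powers of each z_i lie in a finite set.  Thus P_S is a product of
   cyclotomic polynomials Phi_d, and prod_d Phi_d(1) = 1 excludes
   Phi_1(1) = 0 and Phi_p(1) = p for p prime. *)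

Section TriangularProduct.
Variables (R : comNzRingType) (n : nat) (A B : 'M[R]_n).
Hypotheses (trigA : is_trig_mx A) (trigB : is_trig_mx B).

Lemma is_trig_mulmx : is_trig_mx (A *m B).
Proof.
have [/is_trig_mxP A0 /is_trig_mxP B0] := (trigA, trigB).
apply/is_trig_mxP => i j lt_ij; rewrite mxE big1 // => l _.
have [lt_il|le_li] := ltnP i l; first by rewrite A0 ?mul0r.
by rewrite B0 ?mulr0 // (leq_ltn_trans le_li).
Qed.

Lemma mulmx_trig_diag i : (A *m B) i i = A i i * B i i.
Proof.
have [/is_trig_mxP A0 /is_trig_mxP B0] := (trigA, trigB).
rewrite mxE (bigD1 i) //= big1 ?addr0 // => l neq_li.
have [lt_il|le_li] := ltnP i l; first by rewrite A0 ?mul0r.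
rewrite B0 ?mulr0 // ltn_neqAle le_li andbT.
by apply: contra neq_li => /eqP/val_inj ->.
Qed.

End TriangularProduct.

Lemma is_trig_exp (R : comNzRingType) n (A : 'M[R]_n) k :
  is_trig_mx A -> is_trig_mx (A ^+ k).
Proof.
move=> trigA; elim: k => [|k IHk]; first exact: scalar_mx_is_trig.
by rewrite exprS -mulmxE is_trig_mulmx.
Qed.

Lemma exp_trig_diag (R : comNzRingType) n (A : 'M[R]_n) k i :
  is_trig_mx A -> (A ^+ k) i i = A i i ^+ k.
Proof.
move=> trigA; elim: k => [|k IHk]; first by rewrite !expr0 mxE eqxx.
by rewrite !exprS -mulmxE mulmx_trig_diag ?is_trig_exp // IHk.
Qed.

Lemma map_mxX (aR rR : nzRingType) (f : {rmorphism aR -> rR}) n (A : 'M[aR]_n) k :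
  map_mx f (A ^+ k) = map_mx f A ^+ k.
Proof.
elim: k => [|k IHk]; first by rewrite !expr0 map_mx1.
by rewrite !exprS -!mulmxE map_mxM IHk.
Qed.

Lemma char_poly_conj (R : comUnitRingType) n (U A : 'M[R]_n) : U \in unitmx ->
  char_poly (U *m A *m invmx U) = char_poly A.
Proof.
move=> unitU; rewrite /char_poly /char_poly_mx.
pose C := map_mx (@polyC R) U; pose C' := map_mx (@polyC R) (invmx U).
have CC' : C *m C' = 1%:M by rewrite -map_mxM mulmxV // map_mx1.
have C'C : C' *m C = 1%:M by rewrite -map_mxM mulVmx // map_mx1.
have -> : 'X%:M - map_mx polyC (U *m A *m invmx U) =
          C *m ('X%:M - map_mx polyC A) *m C'.
  rewrite !map_mxM mulmxBr mulmxBl -/C -/C'; congr (_ - _).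
  by rewrite mul_mx_scalar -scalemxAl CC' scalemx1.
by rewrite !det_mulmx mulrC mulrA -det_mulmx C'C det1 mul1r.
Qed.

Lemma trigonalizable_algC n (A : 'M[algC]_n) :
  exists2 U, U \in unitmx & is_trig_mx (U *m A *m invmx U).
Proof.
case: n A => [|n] A.
  by exists 1%:M; rewrite ?unitmx1 //; apply/is_trig_mxP => -[].
have [U unitaryU trigU] := Schur A (ltn0Sn n).
by exists U; rewrite ?unitarymx_unit // -conjumx ?unitarymx_unit.
Qed.

Lemma char_poly_exp (n : nat) (A : 'M[algC]_n) :
  exists rs : seq algC,
    forall k, char_poly (A ^+ k) = \prod_(z <- rs) ('X - (z ^+ k)%:P).
Proof.
have [U unitU trigT] := trigonalizable_algC A.
set T := U *m A *m invmx U in trigT.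
have conj_exp k : U *m A ^+ k *m invmx U = T ^+ k.
  elim: k => [|k IHk]; first by rewrite !expr0 mulmx1 mulmxV.
  by rewrite !exprS -!mulmxE -IHk /T !mulmxA mulmxKV.
exists [seq T i i | i <- enum 'I_n] => k.
rewrite -(char_poly_conj _ unitU) conj_exp char_poly_trig ?is_trig_exp //.
by rewrite big_map big_enum; apply: eq_bigr => i _; rewrite exp_trig_diag.
Qed.

Lemma prod_XsubC_coef_le (R : numDomainType) (s : seq R) j :
  all (fun x => `|x| <= 1) s -> `|(\prod_(x <- s) ('X - x%:P))`_j| <= 2%:R ^+ size s.
Proof.
elim: s j => [|a s IHs] j /=.
  by rewrite big_nil coefC; case: j => [|j]; rewrite ?normr1 ?normr0.
case/andP=> le_a1 le_s1; rewrite big_cons mulrBl coefB coefCM exprS mulr_natl mulr2n.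
apply: (le_trans (ler_normB _ _)); apply: lerD.
  by rewrite coefXM; case: j => [|j]; rewrite ?normr0 ?exprn_ge0 ?IHs.
by rewrite normrM -[leRHS]mul1r ler_pM ?IHs.
Qed.

Lemma bounded_int_polys_finite (n : nat) (M : int) : exists Ps : seq {poly int},
  forall Q : {poly int}, (size Q <= n)%N -> (forall j, `|Q`_j| <= M) -> Q \in Ps.
Proof.
pose N := absz M.
pose poly_of (t : n.-tuple 'I_(N + N).+1) := \poly_(i < n) ((nth ord0 t i)%:Z - N%:Z).
exists [seq poly_of t | t <- enum {: n.-tuple 'I_(N + N).+1}] => Q le_Qn le_QM.
have QjN j : 0 <= Q`_j + N%:Z <= (N + N)%:Z.
  by have := le_trans (le_QM j) (lez_abs M); rewrite ler_norml; lia.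
pose t := [tuple inord (absz (Q`_i + N%:Z)) : 'I_(N + N).+1 | i < n].
apply/mapP; exists t; first by rewrite mem_enum.
apply/polyP => j; rewrite coef_poly; case: ltnP => [lt_jn|le_nj].
  rewrite -[j]/(val (Ordinal lt_jn)) -tnth_nth tnth_mktuple /= inordK.
    by rewrite gez0_abs ?addrK //; case/andP: (QjN j).
  by rewrite ltnS -lez_nat gez0_abs //; case/andP: (QjN j).
by rewrite nth_default // (leq_trans le_Qn).
Qed.

Lemma roots_finite (Ps : seq {poly algC}) : exists W : seq algC,
  forall p z, p \in Ps -> p != 0 -> root p z -> z \in W.
Proof.
elim: Ps => [|p Ps [W HW]]; first by exists [::].
have [rs Dp] := closed_field_poly_normal p.
exists (rs ++ W) => q z; rewrite inE mem_cat => /predU1P[->|/HW HWq] nz_q qz.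
  by move: qz; rewrite Dp rootZ ?lead_coef_eq0 // root_prod_XsubC => ->.
by rewrite HWq ?orbT.
Qed.

Lemma root_unity_of_finite_powers (R : idomainType) (z : R) (W : seq R) :
  z != 0 -> (forall k, z ^+ k \in W) -> exists2 m, (0 < m)%N & z ^+ m = 1.
Proof.
move=> nz_z zkW; pose s := [seq z ^+ k | k <- iota 0 (size W).+1].
have sub_sW : {subset s <= W} by move=> _ /mapP[k _ ->].
have : ~~ uniq s.
  by apply/negP => /uniq_leq_size/(_ sub_sW); rewrite size_map size_iota ltnn.
case/(uniqPn 0) => i [j [lt_ij]]; rewrite size_map size_iota => lt_jW.
rewrite !(nth_map 0%N) ?size_iota ?(ltn_trans lt_ij) // !nth_iota ?(ltn_trans lt_ij) //.
rewrite !add0n -(subnKC (ltnW lt_ij)) exprD -{1}[z ^+ i]mulr1 => /mulfI zij.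
by exists (j - i)%N; rewrite ?subn_gt0 // zij // expf_neq0.
Qed.

Theorem kronecker_roots_unity (P : {poly int}) :
  P \is monic -> P`_0 != 0 ->
  (forall z : algC, root (map_poly intr P) z -> `|z| <= 1) ->
  forall z : algC, root (map_poly intr P) z -> exists2 m, (0 < m)%N & z ^+ m = 1.
Proof.
move=> monP nz_P0 P_disc z Pz.
pose n := (size P).-1; pose A : 'M[int]_n := companionmx P.
pose Q k := char_poly (A ^+ k).
have [rs Drs] := char_poly_exp (map_mx intr A).
have DQ k : map_poly intr (Q k) = \prod_(w <- [seq x ^+ k | x <- rs]) ('X - w%:P).
  by rewrite big_map map_char_poly map_mxX Drs.
have DP : map_poly intr P = \prod_(w <- rs) ('X - w%:P).
  by rewrite -(companionmxK monP) -/A -[A]expr1 DQ map_id_in // => x _; rewrite expr1.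
have rs_disc : all (fun x => `|x| <= 1) rs.
  by apply/allP => x rs_x; apply: P_disc; rewrite DP root_prod_XsubC.
have nz_z : z != 0.
  by apply: contra nz_P0 => /eqP z0; move: Pz; rewrite /root z0 horner_coef0 coef_map intr_eq0.
have Q_bound k j : `|(Q k)`_j| <= (2 ^ size rs)%:Z.
  rewrite -(ler_int algC) intr_norm -coef_map DQ -pmulrn natrX.
  rewrite -(size_map (fun x => x ^+ k)).
  apply: prod_XsubC_coef_le; rewrite all_map; apply: sub_all rs_disc => x /=.
  by rewrite normrX; apply: exprn_ile1.
have [Ps HPs] := bounded_int_polys_finite n.+1 (2 ^ size rs)%:Z.
have [W HW] := roots_finite [seq map_poly intr p | p <- Ps].
apply: (root_unity_of_finite_powers nz_z (W := W)) => k.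
apply: (HW (map_poly intr (Q k))).
- by apply: map_f; apply: HPs; rewrite ?size_char_poly.
- by rewrite DQ monic_neq0 // monic_prod_XsubC.
by rewrite DQ root_prod_XsubC; apply: map_f; rewrite -root_prod_XsubC -DP.
Qed.

Lemma Cyclotomic_factor_of_root (P : {poly int}) d (z : algC) :
  d.-primitive_root z -> root (map_poly intr P) z -> exists Q, P = 'Phi_d * Q.
Proof.
move=> prim_z Pz; have [p [Dp _] dvd_p] := minCpolyP z.
have int_rat (q : {poly int}) : map_poly ratr (map_poly intr q) = map_poly intr q :> {poly algC}.
  by rewrite -map_poly_comp; apply: eq_map_poly => a /=; rewrite rmorph_int.
have Dp' : p = map_poly intr 'Phi_d.
  apply: (map_inj_poly (fmorph_inj (ratr : {rmorphism rat -> algC}))).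
    exact: rmorph0.
  by rewrite -Dp int_rat (Cintr_Cyclotomic prim_z) (minCpoly_cyclotomic prim_z).
have : p %| map_poly intr P by rewrite -dvd_p int_rat.
rewrite Dp' dvdp_rat_int => /dvdpP_int[Q ->].
by exists Q; rewrite zprimitive_monic // Cyclotomic_monic.
Qed.

Lemma prod_Cyclotomic_of_roots_unity (P : {poly int}) : P \is monic ->
  (forall z : algC, root (map_poly intr P) z -> exists2 m, (0 < m)%N & z ^+ m = 1) ->
  exists2 L : seq nat, all (fun d => 0 < d)%N L & P = \prod_(d <- L) 'Phi_d.
Proof.
have [k] := ubnP (size P); elim: k P => [//|k IHk] P lt_Pk monP P_unity.
have sizeC : size (map_poly (intr : int -> algC) P) = size P.
  by rewrite size_map_inj_poly //; exact: intr_inj.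
have [/eqP/size_poly1P[c _ Dc]|P_neq1] := eqVneq (size P) 1%N.
  exists [::]; rewrite // big_nil Dc.
  by move: monP; rewrite Dc monicE lead_coefC => /eqP ->.
have /closed_rootP[z Pz] : size (map_poly (intr : int -> algC) P) != 1%N by rewrite sizeC.
have [m m_gt0 zm1] := P_unity z Pz.
have [d prim_z _] := prim_order_exists m_gt0 zm1.
have [Q DP] := Cyclotomic_factor_of_root prim_z Pz.
have monQ : Q \is monic by rewrite -(monicMl _ (Cyclotomic_monic d)) -DP.
have lt_Qk : (size Q < k)%N.
  move: lt_Pk; rewrite DP size_mul ?monic_neq0 ?Cyclotomic_monic // size_Cyclotomic.
  by rewrite addSn ltnS; apply: leq_trans; rewrite /= -{1}[size Q]add0n ltn_add2r totient_gt0 (prim_order_gt0 prim_z).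
have Q_unity (w : algC) : root (map_poly intr Q) w -> exists2 m, (0 < m)%N & w ^+ m = 1.
  by move=> Qw; apply: P_unity; rewrite DP rmorphM rootM Qw orbT.
have [L L_gt0 DQ] := IHk Q lt_Qk monQ Q_unity.
exists (d :: L); first by rewrite /= (prim_order_gt0 prim_z).
by rewrite big_cons DP DQ.
Qed.

Lemma divisors_prime p : prime p -> divisors p = [:: 1%N; p].
Proof.
move=> prime_p; have [uniq_d sorted_d mem_d] := divisors_correct (prime_gt0 prime_p).
apply: (sorted_eq leq_trans anti_leq sorted_d); first by rewrite /= andbT prime_gt0.
apply: uniq_perm => //; first by rewrite /= andbT inE neq_ltn prime_gt1.
move=> d; rewrite mem_d !inE; case/primeP: prime_p => _ dvd_p.
by apply/idP/idP => [/dvd_p//|/orP[]/eqP->]; rewrite ?dvd1n ?dvdnn.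
Qed.

Lemma Cyclotomic1 : 'Phi_1 = 'X - 1.
Proof. by have := prod_Cyclotomic (ltn0Sn 0); rewrite big_cons big_nil mulr1 expr1. Qed.

Lemma Cyclotomic_prime p : prime p -> 'Phi_p = \sum_(i < p) 'X^i.
Proof.
move=> prime_p; have := prod_Cyclotomic (prime_gt0 prime_p).
rewrite divisors_prime // big_cons big_seq1 Cyclotomic1 subrX1 => /mulfI; apply.
by rewrite -size_poly_eq0 size_XsubC.
Qed.

Lemma composite_of_Cyclotomic_unit d :
  (0 < d)%N -> ('Phi_d).[1] \is a GRing.unit -> composite d.
Proof.
move=> d_gt0; rewrite /composite ltn_neqAle d_gt0 andbT eq_sym.
have [->|d_neq1] := eqVneq d 1%N; first by rewrite Cyclotomic1 hornerXsubC subrr unitr0.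
have [prime_d|//] := boolP (prime d).
rewrite Cyclotomic_prime // horner_sum.
under eq_bigr do rewrite hornerXn expr1n.
rewrite sumr_const card_ord qualifE /= natz.
by case/orP=> /eqP // [d1]; rewrite d1 in d_neq1.
Qed.

Lemma sgp_coef_sum (S : pred nat) N : \sum_(i < N.+1) sgp_coef S i = (N \in S)%:Z.
Proof.
elim: N => [|N IHN]; first by rewrite big_ord1 /sgp_coef subr0.
by rewrite big_ord_recr /= IHN /sgp_coef addrC subrK.
Qed.

Lemma semigroup_poly_horner1 (S : pred nat) (P : {poly int}) N :
  (forall n, (N <= n)%N -> n \in S) -> is_semigroup_poly S P -> P.[1] = 1.
Proof.
move=> S_cofinite DP; pose M := maxn (size P) N.
rewrite (@horner_coef_wide _ M.+1); last exact: leqW (leq_maxl _ _).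
under eq_bigr do rewrite expr1n mulr1 DP.
by rewrite sgp_coef_sum S_cofinite // leq_maxr.
Qed.

Theorem lemma3 (S : pred nat) (P : {poly int}) :
  numerical_semigroup S -> is_semigroup_poly S P -> kronecker P ->
  exists (D : seq nat) (e : nat -> nat),
    [/\ uniq D,
        all (fun d => 0 < d)%N D,
        all (fun d => 0 < e d)%N D,
        P = \prod_(d <- D) 'Phi_d ^+ e d
      & all composite D].
Proof.
move=> [S0 _ [N S_cofinite]] DP [monP P_disc].
have nz_P0 : P`_0 != 0 by rewrite DP /sgp_coef S0 subr0 oner_eq0.
have [L L_gt0 DL] := prod_Cyclotomic_of_roots_unity monP
  (kronecker_roots_unity monP nz_P0 P_disc).
have /unitr_prodP Phi_unit : \prod_(d <- L) ('Phi_d).[1] \is a GRing.unit.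
  by rewrite -horner_prod -DL (semigroup_poly_horner1 S_cofinite DP) unitr1.
exists (undup L), (fun d => count_mem d L); split.
- exact: undup_uniq.
- by rewrite all_undup.
- by apply/allP => d; rewrite mem_undup -has_pred1 has_count.
- by rewrite prodr_undup_exp_count.
apply/allP => d; rewrite mem_undup => Ld.
exact: composite_of_Cyclotomic_unit (allP L_gt0 d Ld) (Phi_unit d Ld isT).
Qed.
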